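(* Let $n,\lambda,\mu$ be positive integers with $\mu>\lambda$, and let $\mathcal{A}$ be a strong path decomposition of $\lambda K_n$. Then $\lambda K_n$ is strongly $2$-extendible with respect to $(\mathcal{A},\mu K_n)$ if and only if (B1) $2|\mathcal{S}_0(\mathcal{A})|+|\mathcal{S}_1(\mathcal{A})|\le(\mu-\lambda)\frac{n(n-1)}{2}$, and (B2) for every pair of distinct vertices $u,v$, $|\mathcal{S}_0(\mathcal{A})|+|\mathcal{S}_1(u,v,\mathcal{A})|\le(\mu-\lambda)\left(\frac{n(n-1)}{2}-1\right)$.
   Context: Graphs may have multiple edges. $\lambda K_n$ is the loopless multigraph on $n$ vertices with every pair of distinct vertices joined by exactly $\lambda$ edges; $\lambda K_n$ is regarded as a subgraph of $\mu K_n$ on the same vertex set, and $\mu K_n\setminus\lambda K_n$ denotes the graph obtained by deleting the edges of $\lambda K_n$. A decomposition of size $k$ of a graph $G$ is an ordered $k$-tuple $(G(1),\dots,G(k))$ of spanning subgraphs of $G$ (colour classes; possibly edgeless) with pairwise disjoint edge sets whose union is $E(G)$. A path decomposition is one in which every colour class is a vertex-disjoint union of paths and cycles (two parallel edges form a cycle of length 2); it is strong if no colour class contains a cycle. $\mathcal{S}_i(\mathcal{A})$ is the set of colour classes of $\mathcal{A}$ with exactly $i$ edges, and $\mathcal{S}_1(u,v,\mathcal{A})$ is the set of those in $\mathcal{S}_1(\mathcal{A})$ whose single edge joins $u$ and $v$. For a graph $G\subseteq H$, a strong path decomposition $\mathcal{A}$ of $G$ with $k$ colour classes and a positive integer $\alpha$,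 $G$ is strongly $\alpha$-extendible with respect to $(\mathcal{A},H)$ if there is a graph $F\subseteq H\setminus G$ and a strong path decomposition $\mathcal{A}^*$ of $G\cup F$ of size $k$ whose restriction to $G$ is $\mathcal{A}$ and each $\mathcal{A}^*(i)$ has at least $\alpha$ edges. *)

From mathcomp Require Import all_boot.
Set Implicit Arguments. Unset Strict Implicit. Unset Printing Implicit Defensive.

(* The edges of mu K_n are labelled triples
   (u, v, j) with u < v (the unordered pair {u,v}) and j < mu (which of the
   mu parallel copies).  A (sub)graph of mu K_n on the same vertex set is a
   set of such edges. *)
Definition edge (n mu : nat) := ('I_n * 'I_n * 'I_mu)%type.

Definition valid_edge n mu (e : edge n mu) : bool := (e.1.1 < e.1.2)%N.

Definition joins n mu (e : edge n mu) (u v : 'I_n) : bool :=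
  ((e.1.1 == u) && (e.1.2 == v)) || ((e.1.1 == v) && (e.1.2 == u)).

(* the edge set of lambda K_n, viewed inside mu K_n: copies j < lambda *)
Definition lamK (n mu lam : nat) : {set edge n mu} :=
  [set e | valid_edge e && (e.2 < lam)%N].

Definition fullK (n mu : nat) : {set edge n mu} := lamK n mu mu.

Definition deg n mu (S : {set edge n mu}) (v : 'I_n) : nat :=
  #|[set e in S | (e.1.1 == v) || (e.1.2 == v)]|.

(* S contains a cycle (of length m.+2 >= 2; two parallel edges form a
   cycle of length 2): distinct vertices v_0..v_{m+1}, distinct edges
   e_0..e_{m+1} of S, e_i joining v_i and v_{i+1 mod (m+2)}. *)
Definition has_cycle n mu (S : {set edge n mu}) : Prop :=
  exists (m : nat) (vs : 'I_m.+2 -> 'I_n) (es : 'I_m.+2 -> edge n mu),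
    injective vs /\ injective es /\
    forall i, es i \in S /\ joins (es i) (vs i) (vs (ordS i)).

Definition decomposition n mu (G : {set edge n mu}) k
    (A : 'I_k -> {set edge n mu}) : Prop :=
  (forall i j, i != j -> [disjoint A i & A j]) /\
  (forall e, e \in G <-> exists i, e \in A i).

(* a loopless multigraph is a vertex-disjoint union of paths and cycles
   iff every vertex has degree at most 2 *)
Definition path_decomposition n mu (G : {set edge n mu}) k
    (A : 'I_k -> {set edge n mu}) : Prop :=
  decomposition G A /\ forall i v, (deg (A i) v <= 2)%N.

Definition strong_path_decomposition n mu (G : {set edge n mu}) k
    (A : 'I_k -> {set edge n mu}) : Prop :=
  path_decomposition G A /\ forall i, ~ has_cycle (A i).

Definition strongly_extendible (alpha : nat) n mu (G H : {set edge n mu}) k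
    (A : 'I_k -> {set edge n mu}) : Prop :=
  exists (F : {set edge n mu}) (Astar : 'I_k -> {set edge n mu}),
    F \subset H :\: G /\
    strong_path_decomposition (G :|: F) Astar /\
    (forall i, Astar i :&: G = A i) /\
    (forall i, (alpha <= #|Astar i|)%N).

Definition nS (i : nat) n mu k (A : 'I_k -> {set edge n mu}) : nat :=
  #|[set j : 'I_k | #|A j| == i]|.

Definition nS1uv n mu k (A : 'I_k -> {set edge n mu}) (u v : 'I_n) : nat :=
  #|[set j : 'I_k | (#|A j| == 1) && [forall e in A j, joins e u v]]|.

From mathcomp Require Import all_boot zify.
Set Implicit Arguments. Unset Strict Implicit. Unset Printing Implicit Defensive.

(* Let Av be the edges of mu K_n outside lambda K_n.  In an extension, the new
   edges of the colour classes are pairwise disjoint subsets of Av; an empty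
   class receives at least two of them and a one-edge class at least one.  As a
   colour class has no cycle of length 2, at most one new edge of an empty class
   joins u and v, and none does in a class whose edge already joins u and v;
   counting gives (B1) and (B2).  Conversely, edges of Av are handed out one at
   a time: an empty class takes any edge and becomes a one-edge class that
   forbids the pair of that edge, and a one-edge class takes an edge outside
   its forbidden pair that lies in every pair class which (B2) leaves without
   slack.  Both moves preserve (B1) and (B2). *)

Section Counting.
Variable T : finType.
Implicit Types (S : {set T}) (a : pred T).

Lemma card_set_sum a : #|[set x | a x]| = \sum_x a x.
Proof. by rewrite -sum1dep_card big_mkcond; apply: eq_bigr => x _; case: (a x). Qed.

Lemma card_sepD1 S a x :
  x \in S -> #|[set y in S | a y]| = a x + #|[set y in S :\ x | a y]|.
Proof.
move=> xS; rewrite (cardsD1 x) inE xS /=; congr (_ + _).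
by apply: eq_card => y; rewrite !inE andbA.
Qed.

Definition fiber_card (U : eqType) (g : T -> U) S p := #|[set x in S | g x == p]|.

Lemma sum_fiber_card (U : eqType) (g : T -> U) S (s : seq U) :
  uniq s -> \sum_(p <- s) fiber_card g S p <= #|S|.
Proof.
elim: s S => [|p s IH] S /=; first by rewrite big_nil.
case/andP=> ps /IH uniq_s; rewrite big_cons -(cardsID [set x | g x == p] S).
apply: leq_add; first by apply: subset_leq_card; apply/subsetP=> x; rewrite !inE.
rewrite (eq_big_seq (fiber_card g (S :\: [set x | g x == p]))) ?uniq_s // => q qs.
have qp : q != p by apply: contraNneq ps => <-.
apply: eq_card => x; rewrite !inE.
by case: eqP => [->|]; rewrite ?andbT // ?(negbTE qp) ?andbF.
Qed.

End Counting.

Section Packing.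
Variables (I T : finType).
Implicit Types (S : {set T}) (X : I -> {set T}).

Lemma disjointsU (A B C : {set T}) :
  [disjoint A :|: B & C] = [disjoint A & C] && [disjoint B & C].
Proof. by rewrite !disjoints_subset subUset. Qed.

Definition packing S X :=
  (forall i, X i \subset S) /\ (forall i j, i != j -> [disjoint X i & X j]).

Lemma packing_sum_card S X : packing S X -> \sum_i #|X i| <= #|S|.
Proof.
move=> [sXS dX].
have -> : \sum_i #|X i| = \sum_(x in S) \sum_i (x \in X i).
  rewrite exchange_big; apply: eq_bigr => i _.
  rewrite -sum1_card big_mkcond [RHS]big_mkcond; apply: eq_bigr => x _.
  by case: (boolP (x \in X i)) => [/(subsetP (sXS i)) ->|]; case: (x \in S).
rewrite -sum1_card; apply: leq_sum => x _.
case: (pickP (fun i => x \in X i)) => [i xi|none]; last by rewrite big1 // => i _; rewrite none.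
rewrite (bigD1 i) //= xi big1 // => j ji.
by rewrite (disjointFr (dX i j _) xi) // eq_sym.
Qed.

End Packing.

Section Assignment.
Variables (E P I : finType) (pr : E -> P).
Implicit Types (S : {set E}) (X : I -> {set E}) (J : {set I}) (f : I -> P).

Definition insert_at X i e j := if j == i then e |: X j else X j.

Lemma packing_insert S X i e :
  e \in S -> packing (S :\ e) X -> packing S (insert_at X i e).
Proof.
move=> eS [sXS dX]; have sXS' j : X j \subset S := subset_trans (sXS j) (subD1set S e).
have eX j : e \notin X j by apply/negP => /(subsetP (sXS j)); rewrite !inE eqxx.
split=> [j|j1 j2 j12]; rewrite /insert_at.
  by case: (j == i); rewrite ?subUset ?sub1set ?eS sXS'.
have j21 : j2 != j1 by rewrite eq_sym.
case: (eqVneq j1 i) => [e1|_]; case: (eqVneq j2 i) => [e2|_] /=.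
  by rewrite e1 e2 eqxx in j12.
all: by rewrite ?disjointsU ?(disjoint_sym (X j1)) ?disjointsU ?disjoints1 ?eX ?dX.
Qed.

(* A class p is tight when its demand and its supply together exhaust S.  Serving
   i with e preserves the hypothesis of [assign_single_edges] for J :\ i and
   S :\ e as soon as e lies in every tight class other than f i. *)
Lemma edge_in_tight_classes J f S i :
  i \in J -> #|J| <= #|S| ->
  (forall p, fiber_card f J p + fiber_card pr S p <= #|S|) ->
  exists2 e, e \in S & pr e != f i /\
    forall p, p != f i ->
      fiber_card f J p + fiber_card pr S p = #|S| -> p = pr e.
Proof.
move=> iJ leJS cap.
have s_fi : 0 < fiber_card f J (f i) by apply/card_gt0P; exists i; rewrite inE iJ eqxx.
have s2 p q : uniq [:: p; q] -> fiber_card f J p + fiber_card f J q <= #|J|.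
  by move/(sum_fiber_card f J); rewrite !big_cons big_nil addn0.
have s3 p q r : uniq [:: p; q; r] ->
    fiber_card f J p + fiber_card f J q + fiber_card f J r <= #|J|.
  by move/(sum_fiber_card f J); rewrite !big_cons big_nil addn0 addnA.
have c2 p q : uniq [:: p; q] -> fiber_card pr S p + fiber_card pr S q <= #|S|.
  by move/(sum_fiber_card pr S); rewrite !big_cons big_nil addn0.
case: (pickP (fun p => (p != f i) && (fiber_card f J p + fiber_card pr S p == #|S|)))
  => [p /andP[pfi /eqP tp]|none].
  have : 0 < fiber_card pr S p by have := s2 p (f i); rewrite /= inE pfi /=; lia.
  case/card_gt0P=> e; rewrite inE => /andP[eS /eqP pe]; exists e => //.
  split=> [|q qfi tq]; first by rewrite pe.
  apply/eqP; rewrite pe; apply: contraT => qp.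
  have := s3 p q (f i); have := c2 p q.
  by rewrite /= !inE negb_or (eq_sym p q) qp pfi qfi /=; lia.
have lt_fi : fiber_card pr S (f i) < #|S| by have := cap (f i); lia.
have [e eS pe] : exists2 e, e \in S & pr e != f i.
  apply/exists_inP; apply: contraTT lt_fi => /exists_inPn allS; rewrite -leqNgt.
  by apply: subset_leq_card; apply/subsetP => x xS; rewrite inE xS; exact: negbNE (allS x xS).
exists e => //; split => // p pfi tp.
by have := none p; rewrite pfi tp eqxx.
Qed.

Lemma assign_single_edges J f S :
  #|J| <= #|S| -> (forall p, fiber_card f J p + fiber_card pr S p <= #|S|) ->
  exists X, [/\ packing S X,
    forall i, i \in J -> exists2 e, X i = [set e] & pr e != f i &
    forall i, i \notin J -> X i = set0].
Proof.
have [m] := ubnP #|J|; elim: m J S => // m IH J S ltJm leJS cap.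
have [->|[i iJ]] := set_0Vmem J.
  exists (fun _ => set0); split=> [|i|//]; last by rewrite inE.
  by split=> [i|i j _]; rewrite ?sub0set // -setI_eq0 set0I.
have [e eS [pe tight_e]] := edge_in_tight_classes iJ leJS cap.
have [|||X [packX XJ XnJ]] := IH (J :\ i) (S :\ e).
- by move: ltJm; rewrite (cardsD1 i J) iJ.
- by move: leJS; rewrite (cardsD1 i J) (cardsD1 e S) iJ eS.
- move=> p; have := cap p; have := tight_e p.
  rewrite /fiber_card (card_sepD1 _ iJ) (card_sepD1 _ eS) (cardsD1 e S) eS.
  have [<-|fip] := eqVneq (f i) p; first by move=> _ /=; lia.
  have [<-|prp] := eqVneq (pr e) p; first by move=> _ /=; lia.
  rewrite /= !add0n => /(_ isT) tight_p; rewrite leq_eqVlt => /orP[/eqP/tight_p pe'|].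
    by rewrite pe' eqxx in prp.
  by rewrite add1n ltnS.
exists (insert_at X i e); split; first exact: packing_insert.
- move=> j jJ; rewrite /insert_at; have [->|ji] := eqVneq j i.
    by exists e => //; rewrite XnJ ?setU0 // !inE eqxx.
  by apply: XJ; rewrite !inE ji.
- move=> j jJ; rewrite /insert_at; have [ji|ji] := eqVneq j i.
    by rewrite ji iJ in jJ.
  by apply: XnJ; rewrite !inE ji.
Qed.

Lemma assign_edges J0 J f S :
  [disjoint J0 & J] -> 2 * #|J0| + #|J| <= #|S| ->
  (forall p, #|J0| + fiber_card f J p + fiber_card pr S p <= #|S|) ->
  exists X, [/\ packing S X,
    forall i, i \in J0 -> exists e1 e2, X i = [set e1; e2] /\ pr e1 != pr e2,
    forall i, i \in J -> exists2 e, X i = [set e] & pr e != f i &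
    forall i, i \notin J0 :|: J -> X i = set0].
Proof.
have [m] := ubnP #|J0|; elim: m J0 J f S => // m IH J0 J f S ltJ0m dJ0J leJS cap.
have [J00|[i iJ0]] := set_0Vmem J0.
  have [|p|X [packX XJ XnJ]] := @assign_single_edges J f S.
  - by move: leJS; rewrite J00 cards0.
  - by have := cap p; rewrite J00 cards0.
  by exists X; split=> // i; rewrite J00 !inE //= => /XnJ.
have iJ : i \notin J by rewrite (disjointFr dJ0J iJ0).
have [e1 e1S] : exists e1, e1 \in S.
  by apply/card_gt0P; move: leJS; rewrite (cardsD1 i J0) iJ0; lia.
(* i takes an arbitrary first edge e1 and then only needs one edge outside pr e1. *)
pose f' j := if j == i then pr e1 else f j.
have [||||X [packX XJ0 XJ XnJ]] := IH (J0 :\ i) (i |: J) f' (S :\ e1).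
- by move: ltJ0m; rewrite (cardsD1 i J0) iJ0.
- rewrite -setI_eq0; apply/eqP/setP => j; rewrite !inE.
  by case: eqVneq => //= ji; case: (boolP (j \in J0)) => // /(disjointFr dJ0J) ->.
- by move: leJS; rewrite (cardsD1 i J0) (cardsD1 e1 S) cardsU1 iJ0 iJ e1S; lia.
- move=> p; have := cap p.
  rewrite /fiber_card (card_sepD1 _ e1S) (cardsD1 i J0) (cardsD1 e1 S) iJ0 e1S.
  rewrite (card_sepD1 _ (setU11 i J)) setU1K // /f' eqxx /=.
  have -> : [set j in J | (if j == i then pr e1 else f j) == p] = [set j in J | f j == p].
    by apply/setP => j; rewrite !inE; case: (eqVneq j i) => [->|] //; rewrite (negbTE iJ).
  lia.
exists (insert_at X i e1); split; first exact: packing_insert.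
- move=> j jJ0; rewrite /insert_at; have [->|ji] := eqVneq j i.
    have [|e2 Xi pe2] := XJ i; first exact: setU11.
    by exists e1, e2; rewrite Xi eq_sym; move: pe2; rewrite /f' eqxx.
  by apply: XJ0; rewrite !inE ji.
- move=> j jJ; have ji : j != i by apply: contraNneq iJ => <-.
  rewrite /insert_at (negbTE ji).
  by have [|e Xj pe] := XJ j; [rewrite !inE jJ orbT | exists e; rewrite // /f' (negbTE ji) in pe].
- move=> j; rewrite /insert_at !inE negb_or => /andP[jJ0 jJ].
  have ji : j != i by apply: contraNneq jJ0 => ->.
  by rewrite (negbTE ji) XnJ // !inE (negbTE ji) (negbTE jJ0) (negbTE jJ).
Qed.

End Assignment.

Section Edges.
Variables n mu : nat.
Implicit Types (e x y : edge n mu) (u v : 'I_n) (S : {set edge n mu}).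

Definition between u v : {set edge n mu} := [set e | joins e u v].

Lemma joinsC e u v : joins e u v = joins e v u.
Proof. by rewrite /joins orbC. Qed.

Lemma betweenC u v : between u v = between v u.
Proof. by apply/setP => e; rewrite !inE joinsC. Qed.

Lemma joins_sorted e u v : valid_edge e -> u < v -> joins e u v = (e.1 == (u, v)).
Proof.
case: e => [[a b] j]; rewrite /valid_edge /joins /= xpair_eqE => ab uv.
case: (boolP ((a == v) && (b == u))) => [/andP[/eqP ea /eqP eb]|]; last by rewrite orbF.
by subst; lia.
Qed.

Lemma joins_same_pair x y u v :
  valid_edge x -> valid_edge y -> joins x u v -> joins y u v -> x.1 = y.1.
Proof.
case: x => [[a b] i]; case: y => [[c d] j]; rewrite /valid_edge /joins /=.
by move=> ab cd /orP[]/andP[/eqP ? /eqP ?] /orP[]/andP[/eqP ? /eqP ?]; subst => //; lia.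
Qed.

Lemma has_cycle_parallel S u v x y : u != v -> x \in S -> y \in S -> x != y ->
  joins x u v -> joins y u v -> has_cycle S.
Proof.
move=> uv xS yS xy jx jy.
exists 0, (fun i : 'I_2 => if val i == 0 then u else v),
  (fun i : 'I_2 => if val i == 0 then x else y).
split; last split.
- by move=> [[|[|i]] Hi] [[|[|j]] Hj] //= E; apply: val_inj => //; rewrite E eqxx in uv.
- by move=> [[|[|i]] Hi] [[|[|j]] Hj] //= E; apply: val_inj => //; rewrite E eqxx in xy.
by move=> [[|[|i]] Hi] //=; rewrite joinsC.
Qed.

(* A cycle inside a two-edge set has length 2, so both edges join the same vertices. *)
Lemma acyclic_pair x y :
  valid_edge x -> valid_edge y -> x.1 != y.1 -> ~ has_cycle [set x; y].
Proof.
move=> vx vy xy [m [vs [es [_ [ies es_cyc]]]]].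
have vS z : z \in [set x; y] -> valid_edge z by rewrite !inE => /orP[]/eqP->.
have m0 : m = 0.
  have : #|es @: [set: 'I_m.+2]| <= #|[set x; y]|.
    by apply: subset_leq_card; apply/subsetP => _ /imsetP[i _ ->]; case: (es_cyc i).
  by rewrite (card_imset _ ies) cardsT card_ord cards2; case: (x != y); case: m {vs es ies es_cyc}.
subst m.
have [e0S j0] := es_cyc ord0; have [e1S j1] := es_cyc (ordS ord0).
rewrite (_ : ordS (ordS ord0) = ord0) in j1; last exact: val_inj.
rewrite joinsC in j1.
have := joins_same_pair (vS _ e0S) (vS _ e1S) j0 j1.
have : es ord0 != es (ordS ord0) by apply/eqP => /ies.
move: e0S e1S; rewrite !inE => /orP[]/eqP-> /orP[]/eqP->; rewrite ?eqxx // => _ E.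
all: by rewrite E eqxx in xy.
Qed.

Lemma deg_le_card S v : deg S v <= #|S|.
Proof. by apply: subset_leq_card; apply/subsetP => e; rewrite inE => /andP[]. Qed.

End Edges.
Arguments between {n mu} u v.

Lemma card_ord_geq m l : #|[set j : 'I_m | l <= j]| = m - l.
Proof.
by rewrite -sum1dep_card -(big_geq_mkord l m xpredT (fun _ => 1)) sum_nat_const_nat muln1.
Qed.

Lemma card_ordered_pairs n : #|[set p : 'I_n * 'I_n | p.1 < p.2]| = 'C(n, 2).
Proof.
rewrite -bin2_sum big_mkord -sum1dep_card.
rewrite -(pair_big_dep xpredT (fun a b : 'I_n => a < b) (fun _ _ => 1)) /=.
rewrite (exchange_big_dep xpredT) //=; apply: eq_bigr => b _.
rewrite -(big_mkord (fun i => i < b) (fun _ => 1)).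
by rewrite -(big_nat_widen 0 b n xpredT) ?sum_nat_const_nat ?muln1 ?subn0 // ltnW.
Qed.

Section FreeEdges.
Variables n mu lam : nat.

Lemma free_edgesE :
  fullK n mu :\: lamK n mu lam =
  setX [set p : 'I_n * 'I_n | p.1 < p.2] [set j : 'I_mu | lam <= j].
Proof.
apply/setP => [[p j]]; rewrite !inE /valid_edge /= ltn_ord andbT (leqNgt lam).
by case: (p.1 < p.2); rewrite /= ?andbT.
Qed.

Lemma card_free_edges : #|fullK n mu :\: lamK n mu lam| = (mu - lam) * 'C(n, 2).
Proof. by rewrite free_edgesE cardsX card_ordered_pairs card_ord_geq mulnC. Qed.

Lemma card_free_between u v :
  u != v -> #|(fullK n mu :\: lamK n mu lam) :&: between u v| = mu - lam.
Proof.
wlog uv : u v / u < v.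
  move=> IH; case: (ltngtP u v) => [||/val_inj->]; last by rewrite eqxx.
  - by move=> ? ?; exact: IH.
  - by rewrite eq_sym betweenC; exact: IH.
move=> _; rewrite free_edgesE.
have -> : setX [set p : 'I_n * 'I_n | p.1 < p.2] [set j : 'I_mu | lam <= j] :&: between u v =
    setX [set (u, v)] [set j : 'I_mu | lam <= j].
  apply/setP => [[p j]]; rewrite !inE /=.
  case: (boolP (p.1 < p.2)) => [pv|npv] /=; first by rewrite (joins_sorted (e := (p, j))) // andbC.
  by case: eqP => // pe; rewrite pe uv in npv.
by rewrite cardsX cards1 mul1n card_ord_geq.
Qed.

End FreeEdges.

Section Extension.
Variables (n mu k : nat) (G H : {set edge n mu}) (A : 'I_k -> {set edge n mu}).

Lemma extension_packing (F : {set edge n mu}) (As : 'I_k -> {set edge n mu}) :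
  F \subset H :\: G -> decomposition (G :|: F) As ->
  packing (H :\: G) (fun i => As i :\: G).
Proof.
move=> sF [dAs uAs]; split=> [i|i j ij].
  apply/subsetP => e; rewrite inE => /andP[eG eAs].
  have : e \in G :|: F by apply/uAs; exists i.
  by rewrite inE (negbTE eG) => /(subsetP sF).
by apply: disjointW (dAs i j ij); apply: subsetDl.
Qed.

Lemma new_edges_off_between S u v :
  u != v -> ~ has_cycle S -> 1 < #|S| ->
  (#|S :&: G| == 0) + ((#|S :&: G| == 1) && [forall e in S :&: G, joins e u v])
    <= #|S :\: G :\: between u v|.
Proof.
move=> uv acS S2.
have parallel x y : x \in S -> y \in S -> joins x u v -> joins y u v -> x = y.
  move=> xS yS jx jy; apply/eqP; apply: contraT => xy.
  by case: acS; exact: (has_cycle_parallel uv xS yS).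
case: (eqVneq #|S :&: G| 0) => [SG0|_] /=.
  rewrite SG0 /=; have [x [y [xS yS xy]]] := card_gt1P S2.
  have [z zS jz] : exists2 z, z \in S & ~~ joins z u v.
    case: (boolP (joins x u v)) => jx; last by exists x.
    by exists y => //; apply: contra xy => jy; rewrite (parallel x y).
  have zG : z \notin G.
    by apply: contraT => /negbNE zG; have := card0_eq SG0 z; rewrite !inE zS zG.
  by apply/card_gt0P; exists z; rewrite !inE jz zG zS.
case: (eqVneq #|S :&: G| 1) => [SG1|] //=; rewrite add0n.
have [a SGa] := cards1P (introT eqP SG1).
rewrite SGa; case: (boolP [forall e in [set a], joins e u v]) => //.
move=> /forall_inP/(_ a (set11 a)) ja.
have /setIP[aS aG] : a \in S :&: G by rewrite SGa set11.
have : 0 < #|S :\: G| by have := cardsID G S; rewrite SG1; lia.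
case/card_gt0P => y; rewrite inE => /andP[yG yS].
apply/card_gt0P; exists y; rewrite !inE yG yS !andbT.
by apply: contra yG => jy; rewrite (parallel y a).
Qed.

Lemma extendible_small_classes :
  strongly_extendible 2 G H A -> 2 * nS 0 A + nS 1 A <= #|H :\: G|.
Proof.
case=> F [As [sF [[[decAs _] _] [AsG As2]]]].
apply: leq_trans (packing_sum_card (extension_packing sF decAs)).
rewrite /nS !card_set_sum big_distrr -big_split /=; apply: leq_sum => i _.
have := As2 i; rewrite -(cardsID G (As i)) AsG.
by case: #|A i| => [|[|m]] /=; lia.
Qed.

Lemma extendible_classes_between u v : u != v ->
  strongly_extendible 2 G H A ->
  nS 0 A + nS1uv A u v + #|(H :\: G) :&: between u v| <= #|H :\: G|.
Proof.
move=> uv [F [As [sF [[[decAs _] acAs] [AsG As2]]]]].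
have [sY dY] := extension_packing sF decAs.
have packY : packing (H :\: G :\: between u v) (fun i => As i :\: G :\: between u v).
  split=> [i|i j ij]; first exact: setSD.
  by apply: disjointW (dY i j ij); apply: subsetDl.
rewrite -(cardsID (between u v) (H :\: G)) addnC leq_add2l.
apply: leq_trans (packing_sum_card packY).
rewrite /nS /nS1uv !card_set_sum -big_split /=; apply: leq_sum => i _.
by rewrite -AsG; exact: new_edges_off_between uv (acAs i) (As2 i).
Qed.

Lemma extendible_of_packing X :
  {in G :|: H, forall e, valid_edge e} -> strong_path_decomposition G A ->
  packing (H :\: G) X ->
  (forall i, (X i = set0 /\ 1 < #|A i|) \/
             exists x y, A i :|: X i = [set x; y] /\ x.1 != y.1) ->
  strongly_extendible 2 G H A.
Proof.
move=> vGH [[[dA uA] degA] acA] [sX dX] shapeX.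
have AG i : A i \subset G by apply/subsetP => e eA; apply/uA; exists i.
have XG i : [disjoint X i & G].
  by rewrite disjoint_subset; apply/subsetP => e /(subsetP (sX i)); rewrite !inE => /andP[].
have class i : (A i :|: X i = A i /\ 1 < #|A i|) \/
    exists x y, [/\ A i :|: X i = [set x; y], valid_edge x, valid_edge y & x.1 != y.1].
  case: (shapeX i) => [[-> A2]|[x [y [AXi xy]]]]; first by left; rewrite setU0.
  have vAX z : z \in A i :|: X i -> valid_edge z.
    move=> zAX; apply: vGH; move: zAX; rewrite !inE => /orP[/(subsetP (AG i))->//|].
    by move/(subsetP (sX i)); rewrite !inE => /andP[_ ->]; rewrite orbT.
  by right; exists x, y; split=> //; apply: vAX; rewrite AXi !inE eqxx ?orbT.
exists (\bigcup_i X i), (fun i => A i :|: X i); split; [|split; [|split]].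
- by apply/bigcupsP => i _; exact: sX.
- split; [split; [split|]|].
  + move=> i j ij; have AX i' j' : [disjoint A i' & X j'].
      by rewrite disjoint_sym; exact: disjointWr (AG i') (XG j').
    rewrite disjointsU !(disjoint_sym _ (A j :|: X j)) !disjointsU.
    have ji : j != i by rewrite eq_sym.
    by rewrite (dA _ _ ji) (dX _ _ ji) AX disjoint_sym AX.
  + move=> e; rewrite inE; split.
      by case/orP=> [/uA[i eA] | /bigcupP[i _ eX]]; exists i; rewrite inE ?eA ?eX ?orbT.
    case=> i; rewrite inE => /orP[eA|eX]; apply/orP; [left; apply/uA | right; apply/bigcupP].
      by exists i.
    by exists i.
  + move=> i v; case: (class i) => [[-> _]|[x [y [-> _ _ _]]]]; first exact: degA.
    by apply: leq_trans (deg_le_card _ _) _; rewrite cards2; case: (x != y).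
  + move=> i; case: (class i) => [[-> _]|[x [y [-> vx vy xy]]]]; first exact: acA.
    exact: acyclic_pair.
- by move=> i; rewrite setIUl (setIidPl (AG i)) (disjoint_setI0 (XG i)) setU0.
- move=> i; case: (class i) => [[-> //]|[x [y [-> _ _ xy]]]].
  by rewrite cards2 ltnS lt0b; apply: contraNneq xy => ->.
Qed.

(* Pairs are wrapped in [option] so that the pair of a possibly empty class
   needs no default value. *)
Definition pick_pair (S : {set edge n mu}) := omap (fun e : edge n mu => e.1) [pick e in S].

Lemma fiber_pair_between (S : {set edge n mu}) (q : 'I_n * 'I_n) :
  {in S, forall e, valid_edge e} -> q.1 < q.2 ->
  fiber_card (fun e : edge n mu => Some e.1) S (Some q) = #|S :&: between q.1 q.2|.
Proof.
move=> vS q12; apply: eq_card => e; rewrite !inE.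
case: (boolP (e \in S)) => //= /vS ve.
by rewrite (joins_sorted ve q12) -surjective_pairing.
Qed.

Lemma fiber_pick_pair_between (q : 'I_n * 'I_n) :
  {in G, forall e, valid_edge e} -> (forall i, A i \subset G) -> q.1 < q.2 ->
  fiber_card (pick_pair \o A) [set i | #|A i| == 1] (Some q) = nS1uv A q.1 q.2.
Proof.
move=> vG AG q12; apply: eq_card => i; rewrite !inE /=.
case: (boolP (#|A i| == 1)) => //= /cards1P[a Aa].
have va : valid_edge a by apply: vG; apply: (subsetP (AG i)); rewrite Aa set11.
rewrite /pick_pair Aa pick_set1 /=.
apply/idP/forall_inP => [/eqP[aq] e /set1P->|/(_ a (set11 a))].
  by rewrite (joins_sorted va q12) aq -surjective_pairing.
by rewrite (joins_sorted va q12) -surjective_pairing => /eqP->.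
Qed.

Lemma extendible_of_counts :
  {in G :|: H, forall e, valid_edge e} -> strong_path_decomposition G A ->
  2 * nS 0 A + nS 1 A <= #|H :\: G| ->
  (forall u v, u != v ->
     nS 0 A + nS1uv A u v + #|(H :\: G) :&: between u v| <= #|H :\: G|) ->
  strongly_extendible 2 G H A.
Proof.
move=> vGH hA small between_bound; have [[[_ uA] _] _] := hA.
have AG i : A i \subset G by apply/subsetP => e eA; apply/uA; exists i.
have vG : {in G, forall e, valid_edge e} by move=> e eG; apply: vGH; rewrite inE eG.
have vF : {in H :\: G, forall e, valid_edge e}.
  by move=> e; rewrite inE => /andP[_ eH]; apply: vGH; rewrite inE eH orbT.
pose J0 := [set i | #|A i| == 0]; pose J1 := [set i | #|A i| == 1].
have [||p|X [packX XJ0 XJ1 XnJ]] := assign_edges (pr := fun e : edge n mu => Some e.1)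
  (J0 := J0) (J := J1) (f := pick_pair \o A) (S := H :\: G).
- by rewrite -setI_eq0; apply/eqP/setP => i; rewrite !inE; case: #|A i| => [|[]].
- exact: small.
- rewrite (_ : #|J0| = nS 0 A) //.
  have [c0|] := eqVneq (fiber_card (fun e : edge n mu => Some e.1) (H :\: G) p) 0.
    rewrite c0 addn0; apply: leq_trans small.
    have : fiber_card (pick_pair \o A) J1 p <= nS 1 A.
      by apply: subset_leq_card; apply/subsetP => i; rewrite inE => /andP[].
    by move=> h; rewrite mul2n -addnn -addnA leq_add2l (leq_trans h (leq_addl _ _)).
  rewrite -lt0n => /card_gt0P[e0]; rewrite inE => /andP[e0F /eqP <-].
  have q12 : e0.1.1 < e0.1.2 := vF e0 e0F.
  rewrite fiber_pair_between // fiber_pick_pair_between //.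
  by apply: between_bound; rewrite -val_eqE neq_ltn q12.
apply: extendible_of_packing packX _ => // i.
case: (boolP (i \in J0)) => [iJ0|nJ0].
  have [e1 [e2 [Xi e12]]] := XJ0 i iJ0; right; exists e1, e2.
  by move: iJ0; rewrite inE => /eqP/cards0_eq->; rewrite set0U Xi.
case: (boolP (i \in J1)) => [iJ1|nJ1].
  have [e Xi pe] := XJ1 i iJ1; move: iJ1; rewrite inE => /cards1P[a Aa].
  right; exists a, e; rewrite Aa Xi; split=> //.
  by move: pe; rewrite /= Aa /pick_pair pick_set1 /= eq_sym.
left; split; first by apply: XnJ; rewrite inE negb_or nJ0.
by move: nJ0 nJ1; rewrite !inE; case: #|A i| => [|[]].
Qed.

Lemma strongly_2_extendibleP :
  {in G :|: H, forall e, valid_edge e} -> strong_path_decomposition G A ->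
  strongly_extendible 2 G H A <->
  2 * nS 0 A + nS 1 A <= #|H :\: G| /\
  (forall u v, u != v ->
     nS 0 A + nS1uv A u v + #|(H :\: G) :&: between u v| <= #|H :\: G|).
Proof.
move=> vGH hA; split=> [ext|[small between_bound]]; last exact: extendible_of_counts.
by split=> [|u v uv]; [exact: extendible_small_classes | exact: extendible_classes_between].
Qed.

End Extension.

Theorem proposition2 (n lam mu : nat) (hn : (0 < n)%N) (hlam : (0 < lam)%N)
    (hmu : (lam < mu)%N) (k : nat) (A : 'I_k -> {set edge n mu})
    (hA : strong_path_decomposition (lamK n mu lam) A) :
  strongly_extendible 2 (lamK n mu lam) (fullK n mu) A <->
  ((2 * nS 0 A + nS 1 A <= (mu - lam) * ((n * (n - 1)) %/ 2))%N /\
   (forall u v : 'I_n, u != v ->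
      (nS 0 A + nS1uv A u v <= (mu - lam) * ((n * (n - 1)) %/ 2 - 1))%N)).
Proof.
have pairs_gt0 (u v : 'I_n) : u != v -> 0 < 'C(n, 2).
  move=> uv; have : nat_of_ord u != v := uv.
  by rewrite bin_gt0; have := ltn_ord u; have := ltn_ord v; lia.
rewrite subn1 divn2 -bin2 mulnBr muln1 -card_free_edges.
apply: iff_trans (strongly_2_extendibleP _ hA) _.
  by move=> e; rewrite !inE => /orP[]/andP[].
split=> -[small between_bound]; split=> // u v uv; have := between_bound u v uv.
  by rewrite card_free_between //; lia.
have : mu - lam <= #|fullK n mu :\: lamK n mu lam|.
  by rewrite card_free_edges leq_pmulr // (pairs_gt0 u v).
by rewrite card_free_between //; lia.
Qed.
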